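(* In the standing setting below, the cost function $c$ satisfies Loeper's property if and only if the following holds: for all $X_i=(x_i,u_i)\in\mathbb{X}\times\mathbb{R}$ ($i=0,1$), all $y\in\mathbb{Y}$ and $h\in\mathbb{R}$ with $-c(x_i,y)+h=u_i$ for $i=0,1$, and every point $x_t$ of the $c$-segment with respect to $y$ from $x_0$ to $x_1$, one has $F_{X_0X_1}(x_t)=-c(x_t,y)+h$.
   Context: Standing setting: $\mathbb{X},\mathbb{Y}\subset\mathbb{R}^n$ are compact with non-empty interior; $c:\mathbb{X}\times\mathbb{Y}\to\mathbb{R}$ has continuous $D_xc$, $D_yc$, and continuous mixed second derivatives with $D^2_{xy}c=(D^2_{yx}c)^T$; for each $x$ the map $y\mapsto -D_xc(x,y)$ is injective on $\mathbb{Y}$ and for each $y$ the map $x\mapsto -D_yc(x,y)$ is injective on $\mathbb{X}$; $D^2_{xy}c(x,y)$ is invertible everywhere; for every $y$ the set $[\mathbb{X}]_y=\{-D_yc(x,y):x\in\mathbb{X}\}$ is convex and for every $x$ the set $[\mathbb{Y}]_x=\{-D_xc(x,y):y\in\mathbb{Y}\}$ is convex. $\exp^c_y:[\mathbb{X}]_y\to\mathbb{X}$ is the inverse of $x\mapsto -D_yc(x,y)$. For $x_0,x_1\in\mathbb{X}$, $y\in\mathbb{Y}$, $p_i=-D_yc(x_i,y)$, the $c$-segment with respect to $y$ from $x_0$ to $x_1$ is $\{x_t=\exp^c_y(tp_1+(1-t)p_0):t\in[0,1]\}$. Loeper's property: for all $x_0,x_1\in\mathbb{X}$, $y_0,y\in\mathbb{Y}$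 and every $x_t$ on the $c$-segment with respect to $y_0$ from $x_0$ to $x_1$, $-c(x_t,y)+c(x_t,y_0)\le\max\{-c(x_i,y)+c(x_i,y_0):i=0,1\}$. $c$-chord: for $X_i=(x_i,u_i)\in\mathbb{X}\times\mathbb{R}$, $F_{X_0X_1}(x)=\sup\{-c(x,y)+h: y\in\mathbb{Y},h\in\mathbb{R},-c(x_i,y)+h\le u_i, i=0,1\}$. *)

From HB Require Import structures.
From mathcomp Require Import all_boot all_order all_algebra.
From mathcomp Require Import all_classical all_reals all_analysis.
Set Implicit Arguments. Unset Strict Implicit. Unset Printing Implicit Defensive.
Import Order.TTheory GRing.Theory Num.Theory.
Import numFieldNormedType.Exports.
Local Open Scope classical_set_scope.
Local Open Scope ring_scope.

Definition convex_set (R : realType) (n : nat) (S : set 'rV[R]_n) : Prop :=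
  forall a b, S a -> S b -> forall t : R, 0 <= t <= 1 -> S (t *: a + (1 - t) *: b).

Definition dotv (R : realType) (n : nat) (u v : 'rV[R]_n) : R := (u *m v^T) 0 0.

(* Dxc x y = D_x c(x,y), Dyc x y = D_y c(x,y)
   (gradients, as row vectors), Dxy x y = D^2_{xy} c(x,y) with entries
   d^2 c / dx_i dy_j; hence D^2_{yx} c = (D^2_{xy} c)^T is built in. *)
Definition standing_setting (R : realType) (n : nat) (X Y : set 'rV[R]_n)
  (c : 'rV[R]_n -> 'rV[R]_n -> R) (Dxc Dyc : 'rV[R]_n -> 'rV[R]_n -> 'rV[R]_n)
  (Dxy : 'rV[R]_n -> 'rV[R]_n -> 'M[R]_n) : Prop :=
  compact X /\ compact Y /\ (interior X) !=set0 /\ (interior Y) !=set0 /\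
    (forall x y, X x -> Y y ->
       differentiable (fun z => c z y) x /\
       (forall v, 'd (fun z => c z y) x v = dotv v (Dxc x y))) /\
    (forall x y, X x -> Y y ->
       differentiable (fun z => c x z) y /\
       (forall v, 'd (fun z => c x z) y v = dotv v (Dyc x y))) /\
    {within X `*` Y, continuous (fun p => Dxc p.1 p.2)} /\
    {within X `*` Y, continuous (fun p => Dyc p.1 p.2)} /\
    (forall x y, X x -> Y y ->
       differentiable (fun z => Dxc x z) y /\
       (forall v, 'd (fun z => Dxc x z) y v = v *m (Dxy x y)^T)) /\
    (forall x y, X x -> Y y ->
       differentiable (fun z => Dyc z y) x /\
       (forall v, 'd (fun z => Dyc z y) x v = v *m Dxy x y)) /\
    {within X `*` Y, continuous (fun p => Dxy p.1 p.2)} /\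
    (forall x, X x -> {in Y &, injective (fun y => - Dxc x y)}) /\
    (forall y, Y y -> {in X &, injective (fun x => - Dyc x y)}) /\
    (forall x y, X x -> Y y -> Dxy x y \in unitmx) /\
    (forall y, Y y -> convex_set ((fun x => - Dyc x y) @` X)) /\
    (forall x, X x -> convex_set ((fun y => - Dxc x y) @` Y)).

(* xt lies on the c-segment with respect to y from x0 to x1, i.e.
   xt = exp^c_y (t p1 + (1-t) p0) for some t in [0,1], where exp^c_y is the
   inverse of x |-> -D_y c(x,y) on X. *)
Definition on_c_segment (R : realType) (n : nat) (X : set 'rV[R]_n)
  (Dyc : 'rV[R]_n -> 'rV[R]_n -> 'rV[R]_n) (y x0 x1 xt : 'rV[R]_n) : Prop :=
  exists t : R, 0 <= t <= 1 /\ X xt /\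
    - Dyc xt y = t *: (- Dyc x1 y) + (1 - t) *: (- Dyc x0 y).

Definition loeper_property (R : realType) (n : nat) (X Y : set 'rV[R]_n)
  (c : 'rV[R]_n -> 'rV[R]_n -> R) (Dyc : 'rV[R]_n -> 'rV[R]_n -> 'rV[R]_n) : Prop :=
  forall x0 x1 y0 y xt, X x0 -> X x1 -> Y y0 -> Y y ->
    on_c_segment X Dyc y0 x0 x1 xt ->
    - c xt y + c xt y0 <= Num.max (- c x0 y + c x0 y0) (- c x1 y + c x1 y0).

Definition c_chord (R : realType) (n : nat) (Y : set 'rV[R]_n)
  (c : 'rV[R]_n -> 'rV[R]_n -> R) (x0 : 'rV[R]_n) (u0 : R)
  (x1 : 'rV[R]_n) (u1 : R) (x : 'rV[R]_n) : \bar R :=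
  ereal_sup [set r : \bar R | exists (y : 'rV[R]_n) (h : R),
     [/\ Y y, - c x0 y + h <= u0, - c x1 y + h <= u1 & r = (- c x y + h)%:E]].

Definition chord_property (R : realType) (n : nat) (X Y : set 'rV[R]_n)
  (c : 'rV[R]_n -> 'rV[R]_n -> R) (Dyc : 'rV[R]_n -> 'rV[R]_n -> 'rV[R]_n) : Prop :=
  forall (x0 x1 : 'rV[R]_n) (u0 u1 : R) (y : 'rV[R]_n) (h : R) (xt : 'rV[R]_n),
    X x0 -> X x1 -> Y y ->
    - c x0 y + h = u0 -> - c x1 y + h = u1 ->
    on_c_segment X Dyc y x0 x1 xt ->
    c_chord Y c x0 u0 x1 u1 xt = (- c xt y + h)%:E.

(* The function -c(.,y) + h through X0 and X1 is itself a competitor in the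
   supremum defining the c-chord, so the chord is always at least its value
   at x_t.  The reverse inequality at x_t for every competitor -c(.,y') + h'
   lying below u_0, u_1 at x_0, x_1 is Loeper's property for the pair (y, y')
   after subtracting -c(.,y) + h.  Conversely, the chord property for
   (y_0, h = 0), tested on the competitor -c(.,y) - m with m the maximum in
   Loeper's inequality, gives back Loeper's property. *)
From mathcomp Require Import all_boot all_order all_algebra.
From mathcomp Require Import all_classical all_reals all_analysis.
From mathcomp Require Import lra.
Import Order.TTheory GRing.Theory Num.Theory.
Local Open Scope classical_set_scope.
Local Open Scope ring_scope.

Section CChord.
Variables (R : realType) (n : nat) (X Y : set 'rV[R]_n).
Variables (c : 'rV[R]_n -> 'rV[R]_n -> R) (Dyc : 'rV[R]_n -> 'rV[R]_n -> 'rV[R]_n).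

Lemma c_chord_ge (x0 x1 x : 'rV[R]_n) (u0 u1 : R) (y : 'rV[R]_n) (h : R) :
  Y y -> - c x0 y + h <= u0 -> - c x1 y + h <= u1 ->
  ((- c x y + h)%:E <= c_chord Y c x0 u0 x1 u1 x)%E.
Proof. by move=> Yy le0 le1; apply: ereal_sup_ubound; exists y, h. Qed.

Lemma c_chord_le (x0 x1 x : 'rV[R]_n) (u0 u1 b : R) :
  (forall y h, Y y -> - c x0 y + h <= u0 -> - c x1 y + h <= u1 ->
     - c x y + h <= b) ->
  (c_chord Y c x0 u0 x1 u1 x <= b%:E)%E.
Proof.
move=> ub; apply: ge_ereal_sup => _ [y [h [Yy le0 le1 ->]]].
by rewrite lee_fin; apply: ub.
Qed.

Lemma loeper_chord : loeper_property X Y c Dyc -> chord_property X Y c Dyc.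
Proof.
move=> loeper x0 x1 u0 u1 y h xt X0 X1 Yy <- <- seg.
apply/eqP; rewrite eq_le c_chord_ge // andbT.
apply: c_chord_le => y' h' Yy' le0 le1.
have := loeper x0 x1 y y' xt X0 X1 Yy Yy' seg.
by rewrite le_max => /orP[]; lra.
Qed.

Lemma chord_loeper : chord_property X Y c Dyc -> loeper_property X Y c Dyc.
Proof.
move=> chord x0 x1 y0 y xt X0 X1 Y0 Yy seg.
set m := Num.max _ _.
have [m0 m1] : - c x0 y + c x0 y0 <= m /\ - c x1 y + c x1 y0 <= m.
  by rewrite !le_max !lexx orbT.
have le0 : - c x0 y - m <= - c x0 y0 + 0 by lra.
have le1 : - c x1 y - m <= - c x1 y0 + 0 by lra.
have := @c_chord_ge x0 x1 xt _ _ y (- m) Yy le0 le1.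
by rewrite (chord x0 x1 _ _ y0 0 xt X0 X1 Y0 erefl erefl seg) lee_fin; lra.
Qed.

End CChord.

Theorem proposition3p9 (R : realType) (n : nat) (X Y : set 'rV[R]_n)
  (c : 'rV[R]_n -> 'rV[R]_n -> R) (Dxc Dyc : 'rV[R]_n -> 'rV[R]_n -> 'rV[R]_n)
  (Dxy : 'rV[R]_n -> 'rV[R]_n -> 'M[R]_n) :
  standing_setting X Y c Dxc Dyc Dxy ->
  (loeper_property X Y c Dyc <-> chord_property X Y c Dyc).
Proof. by move=> _; split; [exact: loeper_chord | exact: chord_loeper]. Qed.
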